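(* Let $K$ be a field of characteristic zero, $m\in K[x,y]$ irreducible over $K(x)$ with $n=\deg_y(m)$, and $A=K(x)[y]/\langle m\rangle$ equipped with the derivation $'$ extending $d/dx$. Let $V=(v_1,\dots,v_n)$ be a $K(x)$-vector space basis of $A$ and let $a\in K[x]\setminus\{0\}$ and $B\in K[x]^{n\times n}$ be such that $aV'=BV$. Let $u\in K[x]\setminus\{0\}$ and let $\phi_V:K[x]^n\to u^{-2}K[x]^n$ be the $K$-linear map $\phi_V(p)=\frac{1}{u^2}\big(aup'-au'p+upB\big)$ (with $p$ a row vector). Let $N_V$ be the $K$-subspace of $K[x]^n$ spanned by all $e_ix^j$ ($1\le i\le n$, $j\in\mathbb N$) that are not the leading term of any element of $\operatorname{im}(\phi_V)\cap K[x]^n$. If $\deg_x(B)\le\deg_x(a)-1$, then $N_V$ is a finite-dimensional $K$-vector space.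
   Context: $e_1,\dots,e_n$ is the standard basis of $K^n$. An element $p\in K[x]^n$ is viewed as a polynomial in $x$ with coefficients in $K^n$: if $p=p^{(r)}x^r+\dots+p^{(0)}$ with $p^{(i)}\in K^n$, $p^{(r)}\neq0$, then $\deg_x(p)=r$ and its leading term is $p^{(r)}x^r$; ''$e_ix^j$ is a leading term'' means it equals such a $p^{(r)}x^r$. Likewise $\deg_x(B)$ is the maximum degree of the entries of $B$. *)

From HB Require Import structures.
From mathcomp Require Import all_boot all_order all_algebra fraction qpoly.
Set Implicit Arguments.
Unset Strict Implicit.
Unset Printing Implicit Defensive.
Import Order.TTheory GRing.Theory Num.Theory.
Local Open Scope ring_scope.
Notation "x %:F" := (@FracField.tofrac _ x).

(* K(x) := {fraction {poly K}}.  K[x,y] := {poly {poly K}} : polynomials in y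
   whose coefficients are polynomials in x. *)
Notation Kx K := {fraction {poly K}}.

Definition mF (K : fieldType) (m : {poly {poly K}}) : {poly (Kx K)} :=
  map_poly (fun c : {poly K} => c%:F) m.

(* monic associate of m: generates the same ideal <m> of K(x)[y] *)
Definition mmonic (K : fieldType) (m : {poly {poly K}}) : {poly (Kx K)} :=
  (lead_coef (mF m))^-1 *: mF m.

Definition Aalg (K : fieldType) (m : {poly {poly K}}) := {poly %/ mmonic m}.

Definition is_ddx (K : fieldType) (D : Kx K -> Kx K) : Prop :=
  [/\ forall f g, D (f + g) = D f + D g,
      forall f g, D (f * g) = D f * g + f * D g
    & forall p : {poly K}, D p%:F = (p^`())%:F].

Definition is_derA (K : fieldType) (m : {poly {poly K}})
    (D : Kx K -> Kx K) (dA : Aalg m -> Aalg m) : Prop :=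
  [/\ forall f g, dA (f + g) = dA f + dA g,
      forall f g, dA (f * g) = dA f * g + f * dA g
    & forall c : Kx K, dA (c%:A) = (D c)%:A].

Definition phiV (K : fieldType) (n : nat) (a u : {poly K})
    (B : 'M[{poly K}]_n) (p : 'rV[{poly K}]_n) : 'rV[Kx K]_n :=
  ((u ^+ 2)%:F)^-1 *: map_mx (fun c : {poly K} => c%:F)
     ((a * u) *: map_mx (fun q : {poly K} => q^`()) p
      - (a * u^`()) *: p + u *: (p *m B)).

Definition degx (K : fieldType) (n : nat) (q : 'rV[{poly K}]_n) : nat :=
  \max_(k < n) (size (q ord0 k)).-1.
Definition lcoefx (K : fieldType) (n : nat) (q : 'rV[{poly K}]_n) : 'rV[K]_n :=
  \row_k (q ord0 k)`_(degx q).

Definition monoe (K : fieldType) (n : nat) (i : 'I_n) (j : nat)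
  : 'rV[{poly K}]_n := \row_k (if k == i then 'X^j else 0).

Definition is_lead_term (K : fieldType) (n : nat) (q : 'rV[{poly K}]_n)
    (i : 'I_n) (j : nat) : Prop :=
  [/\ q != 0, degx q = j & lcoefx q = delta_mx ord0 i].

Definition im_phiV_pol (K : fieldType) (n : nat) (a u : {poly K})
    (B : 'M[{poly K}]_n) (q : 'rV[{poly K}]_n) : Prop :=
  exists p, phiV a u B p = map_mx (fun c : {poly K} => c%:F) q.

Definition Kspan (K : fieldType) (n : nat) (S : 'rV[{poly K}]_n -> Prop)
    (v : 'rV[{poly K}]_n) : Prop :=
  exists l : seq (K * 'rV[{poly K}]_n),
    (forall t, t \in l -> S t.2) /\ v = \sum_(t <- l) t.1%:P *: t.2.

Definition NV (K : fieldType) (n : nat) (a u : {poly K})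
    (B : 'M[{poly K}]_n) : 'rV[{poly K}]_n -> Prop :=
  Kspan (fun v => exists (i : 'I_n) (j : nat), v = @monoe K n i j /\
           ~ (exists q, im_phiV_pol a u B q /\ @is_lead_term K n q i j)).

Definition Kfindim (K : fieldType) (n : nat) (S : 'rV[{poly K}]_n -> Prop)
  : Prop :=
  exists s : seq 'rV[{poly K}]_n,
    (forall w, w \in s -> S w) /\ (forall v, S v <-> Kspan (fun w => w \in s) v).

From HB Require Import structures.
From mathcomp Require Import all_boot all_order all_algebra fraction qpoly.
From mathcomp Require Import zify ring.
From Stdlib Require Import ClassicalEpsilon.
Set Implicit Arguments.
Unset Strict Implicit.
Unset Printing Implicit Defensive.
Import GRing.Theory.
Local Open Scope ring_scope.

(* Write d = deg a. For c in K^n, the vector p = c x^(k+1) satisfies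
   phi_V(u p) = a p' + p B, a polynomial vector of degree at most k + d (as
   deg B < d) whose coefficient of x^(k+d) is c M_k with
   M_k = (k+1) lc(a) I + B_(d-1), B_(d-1) being the coefficient of x^(d-1) in B.
   In characteristic zero M_k is invertible for all large k, because
   -(k+1) lc(a) is eventually not an eigenvalue of B_(d-1); then c = e_i M_k^-1
   makes e_i x^(k+d) the leading term of a polynomial vector in im(phi_V). So N_V is spanned by
   the finitely many e_i x^j with j below some bound. *)

Lemma pchar0_eventually_not_root (F : fieldType) (p : {poly F}) :
  [pchar F] =i pred0 -> p != 0 ->
  exists k0, forall k, (k0 <= k)%N -> ~~ root p k%:R.
Proof.
move=> /pcharf0P charF0; have [s] := ubnP (size p).
elim: s p => [|s IHs] p // size_p p0.
have [[r root_r] | no_root] :=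
  excluded_middle_informative (exists r, root p r%:R); last first.
  by exists 0%N => k _; apply/negP => root_k; apply: no_root; exists k.
have [q def_p] := factor_theorem _ _ root_r.
have q0 : q != 0 by apply: contraNneq p0 => q0; rewrite def_p q0 mul0r.
have [k0 nonroot_q] : exists k0, forall k, (k0 <= k)%N -> ~~ root q k%:R.
  apply: IHs (q0); move: size_p.
  by rewrite def_p size_mul ?polyXsubC_eq0 // size_XsubC addn2.
exists (maxn k0 r.+1) => k; rewrite geq_max => /andP[/nonroot_q nonroot_qk lt_rk].
rewrite def_p rootM negb_or nonroot_qk root_XsubC -(subnK (ltnW lt_rk)) natrD.
by rewrite -subr_eq0 addrK charF0 subn_eq0 -ltnNge.
Qed.

Lemma char_poly_nonroot_unitmx (F : fieldType) n (A : 'M[F]_n) x :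
  ~~ root (char_poly A) x -> x%:M - A \in unitmx.
Proof.
rewrite -eigenvalue_root_char => /eigenvalueP no_eig.
rewrite unitmxE unitfE; apply/det0P => -[v v0 vA0]; apply: no_eig; exists v => //.
by move/eqP: vA0; rewrite mulmxBr mul_mx_scalar subr_eq0 eq_sym => /eqP.
Qed.

Lemma pchar0_eventually_unitmx (F : fieldType) n (c : F) (A : 'M[F]_n) :
  [pchar F] =i pred0 -> c != 0 ->
  exists k0, forall k, (k0 <= k)%N -> (k%:R * c)%:M + A \in unitmx.
Proof.
move=> charF0 c0; set A' := - c^-1 *: A.
have [k0 nonroot] :=
  pchar0_eventually_not_root charF0 (monic_neq0 (char_poly_monic A')).
exists k0 => k /nonroot /char_poly_nonroot_unitmx.
have -> : (k%:R * c)%:M + A = c *: ((k%:R)%:M - A').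
  by rewrite scalerBr scale_scalar_mx /A' scaleNr scalerN opprK scalerA divff // scale1r mulrC.
by rewrite unitmxZ // unitfE.
Qed.

Lemma is_lead_term_coefp (F : fieldType) n (q : 'rV[{poly F}]_n) i j :
  (forall t, (j < t)%N -> map_mx (coefp t) q = 0) ->
  map_mx (coefp j) q = delta_mx 0 i -> is_lead_term q i j.
Proof.
move=> q_high q_j.
have q_ij : (q 0 i)`_j = 1.
  by move/rowP/(_ i): (q_j); rewrite !mxE /= !eqxx.
have deg_q : degx q = j.
  apply/eqP; rewrite eqn_leq; apply/andP; split.
    apply/bigmax_leqP => l _; rewrite -subn1 leq_subLR add1n.
    by apply/leq_sizeP => t /q_high/rowP/(_ l); rewrite !mxE.
  apply: leq_trans (leq_bigmax i); rewrite -ltnS (leq_trans _ (leqSpred _)) //.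
  rewrite ltnNge; apply/negP => /leq_sizeP/(_ j (leqnn j)).
  by rewrite q_ij; apply/eqP/oner_neq0.
split=> //; last first.
  by apply/rowP => l; move/rowP/(_ l): q_j; rewrite !mxE deg_q.
by apply: contra_eq_neq q_ij => ->; rewrite mxE coef0 eq_sym oner_neq0.
Qed.

Lemma Kfindim_Kspan_sub (F : fieldType) n (S : 'rV[{poly F}]_n -> Prop)
    (l : seq 'rV[{poly F}]_n) :
  (forall v, S v -> v \in l) -> Kfindim (Kspan S).
Proof.
move=> S_l; pose inS v := if excluded_middle_informative (S v) then true else false.
have inSP v : inS v <-> S v by rewrite /inS; case: excluded_middle_informative.
exists [seq v <- l | inS v]; split=> [w | v].
  rewrite mem_filter => /andP[/inSP Sw _]; exists [:: (1, w)]; split.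
    by move=> t; rewrite inE => /eqP ->.
  by rewrite big_seq1 scale1r.
split=> -[ts [ts_in ->]]; exists ts; split=> // t /ts_in; rewrite mem_filter.
  by move=> St; rewrite S_l // andbT; apply/inSP.
by case/andP => /inSP.
Qed.

Definition phiV1 (K : fieldType) n (a : {poly K}) (B : 'M[{poly K}]_n)
    (p : 'rV[{poly K}]_n) : 'rV[{poly K}]_n :=
  a *: map_mx deriv p + p *m B.

Lemma phiV_scale (K : fieldType) n (a u : {poly K}) (B : 'M[{poly K}]_n) p :
  u != 0 -> phiV a u B (u *: p) = map_mx (fun c => c%:F) (phiV1 a B p).
Proof.
move=> u0; apply/rowP => l; rewrite !mxE.
have -> : \sum_j (u *: p) 0 j * B j l = u * \sum_j p 0 j * B j l.
  by rewrite mulr_sumr; apply: eq_bigr => j _; rewrite !mxE mulrA.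
rewrite derivM; set s := \sum_j _.
have -> : a * u * (u^`() * p 0 l + u * (p 0 l)^`()) - a * u^`() * (u * p 0 l)
   + u * (u * s) = u ^+ 2 * (a * (p 0 l)^`() + s) by ring.
by rewrite [X in _ * X = _]rmorphM mulKf // tofrac_eq0 expf_neq0.
Qed.

Section MonomialImages.

Variables (K : fieldType) (n d : nat) (a : {poly K}) (B : 'M[{poly K}]_n).
Hypotheses (size_a : size a = d.+1) (size_B : forall i j, (size (B i j) <= d)%N).

Local Notation xmono k c := (map_mx (fun x : K => x *: 'X^(k.+1)) c).

Let coef_a_high s : (d < s)%N -> a`_s = 0.
Proof. by move=> lt_ds; rewrite nth_default // size_a. Qed.

Let coef_B_high i j s : (d <= s)%N -> (B i j)`_s = 0.
Proof. by move=> le_ds; rewrite nth_default // (leq_trans (size_B i j)). Qed.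

Let coef_phiV1_xmono (c : 'rV[K]_n) k l t :
  (phiV1 a B (xmono k c) 0 l)`_t =
  c 0 l * k.+1%:R * (a * 'X^k)`_t + \sum_m c 0 m * ('X^(k.+1) * B m l)`_t.
Proof.
rewrite !mxE coefD coef_sum /= derivZ derivXn; congr (_ + _).
  by rewrite -scalerAr coefZ /= (mulrnAr a) coefMn; ring.
by apply: eq_bigr => m _; rewrite !mxE -scalerAl coefZ.
Qed.

Lemma coefp_phiV1_xmono_high (c : 'rV[K]_n) k t :
  (k + d < t)%N -> map_mx (coefp t) (phiV1 a B (xmono k c)) = 0.
Proof.
move=> lt_t; apply/rowP => l; rewrite mxE /= coef_phiV1_xmono mxE.
rewrite coefMXn ifF ?coef_a_high ?mulr0 ?add0r; [|lia|lia].
rewrite big1 // => m _; rewrite coefXnM ifF ?coef_B_high ?mulr0 //; lia.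
Qed.

Lemma coefp_phiV1_xmono_top (c : 'rV[K]_n) k :
  map_mx (coefp (k + d)) (phiV1 a B (xmono k c)) =
  c *m ((k.+1%:R * lead_coef a)%:M + map_mx (coefp d.-1) B).
Proof.
apply/rowP => l; rewrite mxE /= coef_phiV1_xmono mulmxDr mul_mx_scalar !mxE /=.
congr (_ + _).
  by rewrite coefMXn ifF ?addKn ?lead_coefE ?size_a; [ring | lia].
apply: eq_bigr => m _; rewrite !mxE /= coefXnM.
case: (posnP d) => [d0 | d_gt0]; first by rewrite !coef_B_high ?d0 ?if_same.
by rewrite ifF; [congr (_ * _`_ _) | ]; lia.
Qed.

End MonomialImages.

Lemma phiV_lead_terms_eventually (K : fieldType) n (a u : {poly K})
    (B : 'M[{poly K}]_n) :
  [pchar K] =i pred0 -> a != 0 -> u != 0 ->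
  (forall i j, (size (B i j) < size a)%N) ->
  exists J, forall i j, (J <= j)%N ->
    exists q, im_phiV_pol a u B q /\ is_lead_term q i j.
Proof.
move=> charK a0 u0 size_B; set d := (size a).-1.
have size_a : size a = d.+1 by rewrite prednK // size_poly_gt0.
have size_B_le i j : (size (B i j) <= d)%N by rewrite -ltnS -size_a.
have lca0 : lead_coef a != 0 by rewrite lead_coef_eq0.
have [k0 unit_M] := pchar0_eventually_unitmx (map_mx (coefp d.-1) B) charK lca0.
exists (k0 + d)%N => i j le_J_j; set k := (j - d)%N.
have -> : j = (k + d)%N by rewrite subnK //; lia.
pose M := (k.+1%:R * lead_coef a)%:M + map_mx (coefp d.-1) B.
have unit_Mk : M \in unitmx by apply: unit_M; lia.
pose c : 'rV[K]_n := delta_mx 0 i *m invmx M.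
pose p := map_mx (fun x : K => x *: 'X^(k.+1)) c.
exists (phiV1 a B p); split; first by exists (u *: p); apply: phiV_scale.
apply: is_lead_term_coefp => [t|]; first exact: coefp_phiV1_xmono_high.
by rewrite coefp_phiV1_xmono_top // mulmxKV.
Qed.

Theorem proposition14 (K : fieldType) (charK : [pchar K] =i pred0)
  (m : {poly {poly K}}) (m_irr : irreducible_poly (mF m))
  (D : Kx K -> Kx K) (hD : is_ddx D)
  (dA : Aalg m -> Aalg m) (hdA : is_derA D dA)
  (V : ((size (mF m)).-1).-tuple (Aalg m)) (hV : basis_of fullv V)
  (a : {poly K}) (a0 : a != 0) (B : 'M[{poly K}]_((size (mF m)).-1))
  (haB : forall i, (a%:F)%:A * dA (tnth V i)
                   = \sum_j ((B i j)%:F)%:A * tnth V j)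
  (u : {poly K}) (u0 : u != 0)
  (hdeg : forall i j, (size (B i j) < size a)%N) :
  Kfindim (NV a u B).
Proof.
have [J leadJ] := phiV_lead_terms_eventually charK a0 u0 hdeg.
rewrite /NV; apply: (@Kfindim_Kspan_sub _ _ _
  [seq @monoe K _ i j | i <- enum 'I_(size (mF m)).-1, j <- iota 0 J]).
move=> _ [i [j [-> no_lead]]]; apply: allpairs_f; first by rewrite mem_enum.
by rewrite mem_iota add0n; case: ltnP => // /(leadJ i) /no_lead.
Qed.
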